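(* Let $X\in\mathbb{R}^{n\times d}$ with rows $x_1,\dots,x_n$, weighted by $w\in\mathbb{R}^n_{>0}$, be $\mu$-complex, let $\mathcal{W}=\sum_{j=1}^n w_j$, and let $U$ be a matrix whose $d$ (or fewer) columns form an orthonormal basis of the column space of $D_wX$, with rows $U_i$. Then for every $i\in[n]$ the sensitivity satisfies $\varsigma_i\le s_i:=(20+2\mu)\left(\|U_i\|_2+w_i/\mathcal{W}\right)$, and the total sensitivity satisfies $\mathfrak{S}=\sum_{i=1}^n\varsigma_i\le S:=\sum_{i=1}^n s_i\le 44\mu\sqrt{nd}$.
   Context: $g(z)=\ln(1+e^z)$ and $f_w(X\beta)=\sum_{j=1}^n w_j g(x_j\beta)$. The sensitivity of the $i$-th point is $\varsigma_i=\sup_{\beta\in\mathbb{R}^d}\frac{w_i g(x_i\beta)}{f_w(X\beta)}$. $D_w$ is the diagonal matrix with $(D_w)_{ii}=w_i$. For a vector $v$, $v^+$ and $v^-$ denote the vectors of its positive and negative entries. $\mu_w(X)=\sup_{\beta:\,D_wX\beta\neq0}\|(D_wX\beta)^+\|_1/\|(D_wX\beta)^-\|_1$, and $X$ weighted by $w$ is $\mu$-complex if $\mu_w(X)\le\mu$ (note $\mu_w(X)\ge 1$ by symmetry $\beta\mapsto-\beta$). *)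

From Stdlib Require Import Reals Lra ClassicalEpsilon.
Open Scope R_scope.

Fixpoint sumR (n : nat) (f : nat -> R) : R :=
  match n with
  | O => 0
  | S m => sumR m f + f m
  end.

(* Least upper bound of a set of reals (chosen classically; meaningful when
   the set is nonempty and bounded above, as it is for sensitivities). *)
Definition lubR (E : R -> Prop) : R :=
  epsilon (inhabits 0) (fun m => is_lub E m).

Definition g (z : R) : R := ln (1 + exp z).

(* A matrix X in R^{n x d} is a function nat -> nat -> R, entry X i a for
   i < n, a < d; a vector beta in R^d is a function nat -> R (entries a < d). *)

Definition rowdot (d : nat) (X : nat -> nat -> R) (i : nat) (beta : nat -> R) : R :=
  sumR d (fun a => X i a * beta a).

Definition f_w (n d : nat) (w : nat -> R) (X : nat -> nat -> R) (beta : nat -> R) : R :=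
  sumR n (fun j => w j * g (rowdot d X j beta)).

Definition sensitivity (n d : nat) (w : nat -> R) (X : nat -> nat -> R) (i : nat) : R :=
  lubR (fun r => exists beta : nat -> R,
          r = w i * g (rowdot d X i beta) / f_w n d w X beta).

Definition posR (x : R) : R := Rmax x 0.
Definition negR (x : R) : R := Rmax (- x) 0.

(* X weighted by w is mu-complex: mu_w(X) <= mu, where
   mu_w(X) = sup_{beta : D_w X beta <> 0} ||(D_w X beta)^+||_1 / ||(D_w X beta)^-||_1.
   Unfolded: for every beta with D_w X beta <> 0, the ratio is <= mu
   (an infinite ratio, i.e. zero negative part, is excluded). *)
Definition mu_complex (n d : nat) (w : nat -> R) (X : nat -> nat -> R) (mu : R) : Prop :=
  forall beta : nat -> R,
    (exists i, (i < n)%nat /\ w i * rowdot d X i beta <> 0) ->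
    sumR n (fun i => negR (w i * rowdot d X i beta)) <> 0 /\
    sumR n (fun i => posR (w i * rowdot d X i beta))
      / sumR n (fun i => negR (w i * rowdot d X i beta)) <= mu.

Definition orthonormal_basis_colspace (n d k : nat) (w : nat -> R)
    (X U : nat -> nat -> R) : Prop :=
  (forall a b, (a < k)%nat -> (b < k)%nat ->
     sumR n (fun i => U i a * U i b) = if Nat.eq_dec a b then 1 else 0) /\
  (forall v : nat -> R,
     (exists c : nat -> R, forall i, (i < n)%nat -> v i = sumR k (fun a => U i a * c a))
     <->
     (exists beta : nat -> R, forall i, (i < n)%nat -> v i = w i * rowdot d X i beta)).

Definition row_norm2 (k : nat) (U : nat -> nat -> R) (i : nat) : R :=
  sqrt (sumR k (fun a => U i a ^ 2)).

From Stdlib Require Import Reals.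
From Stdlib Require Import Lra Psatz ClassicalEpsilon Classical.
Open Scope R_scope.

(* Write y = D_w X beta for the weighted margins and f = f_w(X beta).
   The argument compares both numerator and denominator of the sensitivity
   ratio with the l1-norm |y|_1:
   - leverage: y lies in the column space of U, and U has orthonormal
     columns, so |y_i| <= |U_i|_2 |y|_2 <= |U_i|_2 |y|_1  (Cauchy-Schwarz
     plus Parseval);
   - mu-complexity applied to -beta gives |y^-|_1 <= mu |y^+|_1, and
     |y^+|_1 <= f since g(z) >= max(z,0); hence |y|_1 <= (1+mu) f;
   - g(z) >= 1/4 for z >= -1 gives the total weight bound W <= 4 f + |y|_1;
   - g(z) <= 1 + max(z,0) bounds the numerator by w_i + |y_i|.
   Together: w_i g(x_i beta) <= (20+2mu)(|U_i|_2 + w_i/W) f for all beta,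
   so the supremum varsigma_i obeys the same bound.  For the total, the
   squared row norms of U sum to k <= d, and Cauchy-Schwarz over the rows
   gives sum_i |U_i|_2 <= sqrt(n d). *)

(** * Finite sums *)

Lemma sumR_ext n f h : (forall i, (i < n)%nat -> f i = h i) -> sumR n f = sumR n h.
Proof.
  induction n as [|n IH]; intros H; simpl; [reflexivity|].
  rewrite IH by (intros; apply H; lia). rewrite H by lia. reflexivity.
Qed.

Lemma sumR_le n f h : (forall i, (i < n)%nat -> f i <= h i) -> sumR n f <= sumR n h.
Proof.
  induction n as [|n IH]; intros H; simpl; [lra|].
  assert (sumR n f <= sumR n h) by (apply IH; intros; apply H; lia).
  specialize (H n ltac:(lia)). lra.
Qed.

Lemma sumR_const n c : sumR n (fun _ => c) = INR n * c.
Proof. induction n as [|n IH]; simpl sumR; [simpl; ring|]. rewrite IH, S_INR. ring. Qed.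

Lemma sumR_nonneg n f : (forall i, (i < n)%nat -> 0 <= f i) -> 0 <= sumR n f.
Proof.
  intros H. replace 0 with (sumR n (fun _ => 0)) by (rewrite sumR_const; ring).
  apply sumR_le. exact H.
Qed.

Lemma sumR_pos n f : (0 < n)%nat -> (forall i, (i < n)%nat -> 0 < f i) -> 0 < sumR n f.
Proof.
  intros hn H. destruct n as [|n]; [lia|]. simpl.
  assert (0 <= sumR n f) by (apply sumR_nonneg; intros; left; apply H; lia).
  specialize (H n ltac:(lia)). lra.
Qed.

Lemma sumR_plus n f h : sumR n (fun i => f i + h i) = sumR n f + sumR n h.
Proof. induction n as [|n IH]; simpl; [ring| rewrite IH; ring]. Qed.

Lemma sumR_scal_l n c f : sumR n (fun i => c * f i) = c * sumR n f.
Proof. induction n as [|n IH]; simpl; [ring| rewrite IH; ring]. Qed.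

Lemma sumR_scal_r n c f : sumR n (fun i => f i * c) = sumR n f * c.
Proof. induction n as [|n IH]; simpl; [ring| rewrite IH; ring]. Qed.

Lemma sumR_swap n m (f : nat -> nat -> R) :
  sumR n (fun i => sumR m (fun a => f i a)) = sumR m (fun a => sumR n (fun i => f i a)).
Proof.
  induction n as [|n IH]; simpl.
  - rewrite sumR_const. ring.
  - rewrite IH, sumR_plus. reflexivity.
Qed.

Lemma sumR_kronecker m a h : (a < m)%nat ->
  sumR m (fun b => h b * (if Nat.eq_dec a b then 1 else 0)) = h a.
Proof.
  induction m as [|m IH]; intros Ha; [lia|]. simpl.
  destruct (Nat.eq_dec a m) as [->|Hne].
  - rewrite (sumR_ext m _ (fun _ => 0)), sumR_const; [ring|].
    intros i Hi. destruct (Nat.eq_dec m i); [lia|ring].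
  - rewrite IH by lia. ring.
Qed.

Lemma sumR_sqr k f : (sumR k f)^2 = sumR k (fun a => sumR k (fun b => f a * f b)).
Proof.
  rewrite (sumR_ext k (fun a => sumR k (fun b => f a * f b)) (fun a => f a * sumR k f)).
  - rewrite sumR_scal_r. ring.
  - intros a _. apply sumR_scal_l.
Qed.

(* Cauchy-Schwarz, via the nonnegative quadratic t |-> sum (a_i t + b_i)^2. *)
Lemma cauchy_schwarz n a b :
  (sumR n (fun i => a i * b i))^2 <= sumR n (fun i => a i ^2) * sumR n (fun i => b i ^2).
Proof.
  set (A := sumR n (fun i => a i ^2)). set (B := sumR n (fun i => b i ^2)).
  set (P := sumR n (fun i => a i * b i)).
  assert (Hquad : forall t, 0 <= t^2 * A + 2 * t * P + B).
  { intros t.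
    replace (t^2 * A + 2 * t * P + B) with (sumR n (fun i => (a i * t + b i)^2)).
    - apply sumR_nonneg; intros; apply pow2_ge_0.
    - unfold A, B, P. clear. induction n as [|n IH]; cbn [sumR]; [ring|]. rewrite IH; ring. }
  assert (HA : 0 <= A) by (apply sumR_nonneg; intros; apply pow2_ge_0).
  destruct (Req_dec A 0) as [HA0|HA0].
  - destruct (Req_dec P 0) as [HP0|HP0]; [rewrite HP0, HA0; lra|].
    specialize (Hquad (-(B+1)/(2*P))).
    replace ((- (B + 1) / (2 * P)) ^ 2 * A + 2 * (- (B + 1) / (2 * P)) * P + B)
      with (-1) in Hquad by (rewrite HA0; field; exact HP0). lra.
  - specialize (Hquad (-P/A)).
    replace ((- P / A) ^ 2 * A + 2 * (- P / A) * P + B) with ((A*B - P^2)/A) in Hquad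
      by (field; exact HA0).
    assert (0 <= A * ((A*B - P^2)/A)) by (apply Rmult_le_pos; lra).
    replace (A * ((A*B - P^2)/A)) with (A*B - P^2) in H by (field; exact HA0). lra.
Qed.

Lemma sum_sq_le_sq_l1 n y : sumR n (fun i => y i ^2) <= (sumR n (fun i => Rabs (y i)))^2.
Proof.
  induction n as [|n IH]; cbn [sumR]; [lra|].
  assert (0 <= sumR n (fun i => Rabs (y i))) by (apply sumR_nonneg; intros; apply Rabs_pos).
  pose proof (Rabs_pos (y n)). rewrite <- (pow2_abs (y n)). nra.
Qed.

Lemma abs_le_of_sq_le x b : 0 <= b -> x^2 <= b^2 -> Rabs x <= b.
Proof.
  intros Hb H. rewrite <- (Rabs_pos_eq b Hb). apply Rsqr_le_abs_0.
  unfold Rsqr. lra.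
Qed.

(** * The loss g(z) = ln(1 + e^z) *)

Lemma posR_ge x : x <= posR x.
Proof. apply Rmax_l. Qed.

Lemma posR_nonneg x : 0 <= posR x.
Proof. apply Rmax_r. Qed.

Lemma abs_split x : Rabs x = posR x + negR x.
Proof. unfold posR, negR, Rmax. repeat destruct Rle_dec; unfold Rabs; destruct Rcase_abs; lra. Qed.

Lemma ln_le_mono x y : 0 < x -> x <= y -> ln x <= ln y.
Proof. intros. destruct (Req_dec x y) as [->|]; [lra|]. left; apply ln_increasing; lra. Qed.

Lemma exp_le_mono x y : x <= y -> exp x <= exp y.
Proof. intros. destruct (Req_dec x y) as [->|]; [lra|]. left; apply exp_increasing; lra. Qed.

Lemma g_pos z : 0 < g z.
Proof.
  unfold g. rewrite <- ln_1. apply ln_increasing; [lra|]. pose proof (exp_pos z); lra.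
Qed.

(* g(z) <= 1 + max(z,0), since 1 + e^z <= 2 e^(max(z,0)) <= e^(1 + max(z,0)). *)
Lemma g_upper z : g z <= 1 + posR z.
Proof.
  unfold g. rewrite <- (ln_exp (1 + posR z)).
  apply ln_le_mono; [pose proof (exp_pos z); lra|].
  rewrite exp_plus.
  assert (He : 2 <= exp 1) by (pose proof (exp_ineq1_le 1); lra).
  pose proof (exp_le_mono _ _ (posR_ge z)).
  pose proof (exp_le_mono _ _ (posR_nonneg z)) as H1. rewrite exp_0 in H1.
  nra.
Qed.

Lemma g_lower z : posR z <= g z.
Proof.
  apply Rmax_lub; [|left; apply g_pos].
  unfold g. rewrite <- (ln_exp z) at 1.
  left. apply ln_increasing; [apply exp_pos|lra].
Qed.

(* ln(1+u) >= u/(1+u), from e^x >= 1 + x at x = -ln(1+u). *)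
Lemma ln_1p_lower u : 0 < u -> u / (1 + u) <= ln (1 + u).
Proof.
  intros Hu. pose proof (exp_ineq1_le (- ln (1+u))) as H.
  rewrite exp_Ropp, exp_ln in H by lra.
  assert (/ (1+u) = 1 - u/(1+u)) by (field; lra). lra.
Qed.

(* g(z) >= 1/4 as soon as z >= -1 (using e <= 3). *)
Lemma g_ge_quarter z : -1 <= z -> / 4 <= g z.
Proof.
  intros Hz. unfold g. pose proof (exp_pos z) as Hp.
  eapply Rle_trans; [|apply ln_1p_lower; exact Hp].
  assert (Hez : / exp 1 <= exp z).
  { rewrite <- exp_Ropp. apply exp_le_mono. lra. }
  assert (/ 3 <= / exp 1) by (apply Rinv_le_contravar; [apply exp_pos|apply exp_le_3]).
  apply (Rmult_le_reg_r (4 * (1 + exp z))); [lra|].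
  replace (exp z / (1 + exp z) * (4 * (1 + exp z))) with (4 * exp z) by (field; lra).
  lra.
Qed.

(** * Orthonormal columns: Parseval and leverage bounds *)

Section Orthonormal.

Variables (n k : nat) (U : nat -> nat -> R).

Hypothesis U_orthonormal : forall a b, (a < k)%nat -> (b < k)%nat ->
  sumR n (fun i => U i a * U i b) = if Nat.eq_dec a b then 1 else 0.

Let row_norm2_sqr i : row_norm2 k U i ^ 2 = sumR k (fun a => U i a ^ 2).
Proof. apply pow2_sqrt, sumR_nonneg. intros; apply pow2_ge_0. Qed.

Lemma parseval c :
  sumR n (fun j => (sumR k (fun a => U j a * c a))^2) = sumR k (fun a => c a ^2).
Proof.
  rewrite (sumR_ext n _ (fun j => sumR k (fun a => sumR k (fun b =>
             (U j a * U j b) * (c a * c b))))).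
  2:{ intros j _. rewrite sumR_sqr.
      apply sumR_ext; intros a _. apply sumR_ext; intros b _. ring. }
  rewrite sumR_swap. apply sumR_ext; intros a ha.
  rewrite sumR_swap.
  rewrite (sumR_ext k _ (fun b => (c a * c b) * (if Nat.eq_dec a b then 1 else 0))).
  - rewrite sumR_kronecker by exact ha. ring.
  - intros b hb. rewrite sumR_scal_r, U_orthonormal by assumption. ring.
Qed.

Lemma leverage_bound (y c : nat -> R)
  (Hy : forall j, (j < n)%nat -> y j = sumR k (fun a => U j a * c a))
  i (hi : (i < n)%nat) :
  Rabs (y i) <= row_norm2 k U i * sumR n (fun j => Rabs (y j)).
Proof.
  assert (Hl1 : 0 <= sumR n (fun j => Rabs (y j)))
    by (apply sumR_nonneg; intros; apply Rabs_pos).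
  assert (Hrow : 0 <= row_norm2 k U i) by apply sqrt_pos.
  apply abs_le_of_sq_le; [now apply Rmult_le_pos|].
  assert (Hnorm_y : sumR k (fun a => c a ^2) = sumR n (fun j => y j ^2)).
  { rewrite <- parseval. apply sumR_ext. intros j hj. now rewrite Hy. }
  assert (Hcs : y i ^2 <= row_norm2 k U i ^2 * sumR n (fun j => y j ^2)).
  { rewrite Hy, row_norm2_sqr, <- Hnorm_y by exact hi. apply cauchy_schwarz. }
  pose proof (sum_sq_le_sq_l1 n y).
  assert (0 <= row_norm2 k U i ^2) by apply pow2_ge_0.
  rewrite Rpow_mult_distr. nra.
Qed.

Lemma sum_row_norm2_sqr : sumR n (fun i => row_norm2 k U i ^2) = INR k.
Proof.
  rewrite (sumR_ext n _ (fun i => sumR k (fun a => U i a * U i a))).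
  2:{ intros i _. rewrite row_norm2_sqr. apply sumR_ext; intros; ring. }
  rewrite sumR_swap, <- (Rmult_1_r (INR k)), <- sumR_const.
  apply sumR_ext. intros a ha.
  rewrite U_orthonormal by exact ha. destruct (Nat.eq_dec a a); [reflexivity|lia].
Qed.

Lemma sum_row_norm2_le : sumR n (fun i => row_norm2 k U i) <= sqrt (INR n * INR k).
Proof.
  pose proof (cauchy_schwarz n (fun _ => 1) (fun i => row_norm2 k U i)) as Hcs.
  cbv beta in Hcs.
  rewrite (sumR_ext n (fun _ => 1 ^ 2) (fun _ => 1)), sumR_const, sum_row_norm2_sqr,
    (sumR_ext n (fun i => 1 * row_norm2 k U i) (fun i => row_norm2 k U i)) in Hcs
    by (intros; ring).
  rewrite <- (sqrt_pow2 (sumR n (fun i => row_norm2 k U i)))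
    by (apply sumR_nonneg; intros; apply sqrt_pos).
  apply sqrt_le_1_alt. lra.
Qed.

End Orthonormal.

(** * The weighted margins and the loss f_w *)

Definition margins (d : nat) (w : nat -> R) (X : nat -> nat -> R) (beta : nat -> R)
  : nat -> R := fun j => w j * rowdot d X j beta.

Lemma rowdot_opp d X j beta : rowdot d X j (fun a => - beta a) = - rowdot d X j beta.
Proof.
  unfold rowdot. rewrite (sumR_ext d _ (fun a => -1 * (X j a * beta a))).
  - rewrite sumR_scal_l. ring.
  - intros; ring.
Qed.

Section Loss.

Variables (n d : nat) (w : nat -> R) (X : nat -> nat -> R).
Hypothesis w_pos : forall j, (j < n)%nat -> 0 < w j.

Lemma f_w_pos beta : (0 < n)%nat -> 0 < f_w n d w X beta.
Proof.
  intros hn. apply sumR_pos; [exact hn|].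
  intros j hj. apply Rmult_lt_0_compat; [now apply w_pos|apply g_pos].
Qed.

Lemma pos_mass_le_f_w beta :
  sumR n (fun j => posR (margins d w X beta j)) <= f_w n d w X beta.
Proof.
  apply sumR_le. intros j hj. pose proof (w_pos j hj).
  unfold margins. apply Rmax_lub.
  - apply Rmult_le_compat_l; [lra|].
    eapply Rle_trans; [apply posR_ge|apply g_lower].
  - left. apply Rmult_lt_0_compat; [lra|apply g_pos].
Qed.

(* The total weight is controlled by the loss and the margins:
   each w_j <= 4 w_j g(z_j) if z_j >= -1, and w_j <= |w_j z_j| otherwise. *)
Lemma total_weight_le beta :
  sumR n w <= 4 * f_w n d w X beta + sumR n (fun j => Rabs (margins d w X beta j)).
Proof.
  unfold f_w. rewrite <- sumR_scal_l, <- sumR_plus. apply sumR_le. intros j hj.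
  pose proof (w_pos j hj). unfold margins.
  rewrite Rabs_mult, (Rabs_pos_eq (w j)) by lra.
  pose proof (g_pos (rowdot d X j beta)). pose proof (Rabs_pos (rowdot d X j beta)).
  destruct (Rle_lt_dec (-1) (rowdot d X j beta)) as [Hz|Hz].
  - pose proof (g_ge_quarter _ Hz). nra.
  - assert (1 < Rabs (rowdot d X j beta)) by (rewrite Rabs_left by lra; lra). nra.
Qed.

Lemma weighted_loss_le beta i : (i < n)%nat ->
  w i * g (rowdot d X i beta) <= w i + Rabs (margins d w X beta i).
Proof.
  intros hi. pose proof (w_pos i hi). unfold margins.
  rewrite Rabs_mult, (Rabs_pos_eq (w i)) by lra.
  pose proof (g_upper (rowdot d X i beta)).
  assert (posR (rowdot d X i beta) <= Rabs (rowdot d X i beta))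
    by (apply Rmax_lub; [apply Rle_abs|apply Rabs_pos]).
  nra.
Qed.

(* mu-complexity applied to -beta: |y^-|_1 <= mu |y^+|_1 for y = D_w X beta.
   If y = 0 both sides vanish. *)
Lemma neg_mass_le beta (mu : R) : 0 <= mu -> mu_complex n d w X mu ->
  sumR n (fun j => negR (margins d w X beta j))
    <= mu * sumR n (fun j => posR (margins d w X beta j)).
Proof.
  intros Hmu0 Hmu. unfold margins.
  set (P := sumR n (fun j => posR (w j * rowdot d X j beta))).
  set (N := sumR n (fun j => negR (w j * rowdot d X j beta))).
  assert (HP0 : 0 <= P) by (apply sumR_nonneg; intros; apply posR_nonneg).
  destruct (classic (exists j, (j < n)%nat /\ w j * rowdot d X j beta <> 0))
    as [[j [hj Hj]]|Hzero].
  - destruct (Hmu (fun a => - beta a)) as [HP HNP].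
    { exists j. split; [exact hj|]. rewrite rowdot_opp. contradict Hj. lra. }
    assert (EP : sumR n (fun i => negR (w i * rowdot d X i (fun a => - beta a))) = P).
    { apply sumR_ext. intros. rewrite rowdot_opp. unfold negR, posR. f_equal. ring. }
    assert (EN : sumR n (fun i => posR (w i * rowdot d X i (fun a => - beta a))) = N).
    { apply sumR_ext. intros. rewrite rowdot_opp. unfold negR, posR. f_equal. ring. }
    rewrite EP, EN in *.
    apply (Rmult_le_compat_r P) in HNP; [|exact HP0].
    replace (N / P * P) with N in HNP by (field; exact HP). lra.
  - replace N with 0; [nra|].
    unfold N. rewrite <- (Rmult_0_r (INR n)), <- sumR_const. apply sumR_ext. intros j hj.
    destruct (Req_dec (w j * rowdot d X j beta) 0) as [E|E].
    + rewrite E. symmetry. apply Rmax_right. lra.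
    + exfalso. apply Hzero. now exists j.
Qed.

Lemma margins_l1_le beta (mu : R) : 0 <= mu -> mu_complex n d w X mu ->
  sumR n (fun j => Rabs (margins d w X beta j)) <= (1 + mu) * f_w n d w X beta.
Proof.
  intros Hmu0 Hmu.
  rewrite (sumR_ext n _ (fun j => posR (margins d w X beta j) + negR (margins d w X beta j)))
    by (intros; apply abs_split).
  rewrite sumR_plus.
  pose proof (neg_mass_le beta mu Hmu0 Hmu). pose proof (pos_mass_le_f_w beta).
  nra.
Qed.

End Loss.

(** * The sensitivity bound *)

Lemma weighted_loss_ratio_le (n d k : nat) (X : nat -> nat -> R) (w : nat -> R)
  (mu : R) (U : nat -> nat -> R)
  (hn : (0 < n)%nat) (hmu1 : 1 <= mu)
  (hw : forall j, (j < n)%nat -> 0 < w j)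
  (hmu : mu_complex n d w X mu)
  (hU : orthonormal_basis_colspace n d k w X U) beta i (hi : (i < n)%nat) :
  w i * g (rowdot d X i beta) <=
    (20 + 2 * mu) * (row_norm2 k U i + w i / sumR n w) * f_w n d w X beta.
Proof.
  destruct hU as [Horth Hspan].
  set (y := margins d w X beta).
  set (f := f_w n d w X beta). set (W := sumR n w).
  set (A := row_norm2 k U i). set (Y := sumR n (fun j => Rabs (y j))).
  assert (Hf : 0 < f) by (apply f_w_pos; assumption).
  assert (HW : 0 < W) by (apply sumR_pos; assumption).
  assert (HA : 0 <= A) by apply sqrt_pos.
  assert (Hwi : 0 < w i) by (apply hw; exact hi).
  assert (Hlev : Rabs (y i) <= A * Y).
  { destruct (proj2 (Hspan y)) as [c Hc]; [now exists beta|].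
    now apply (leverage_bound n k U Horth y c). }
  assert (HY : Y <= (1 + mu) * f) by (apply margins_l1_le; [assumption|lra|assumption]).
  assert (HWf : W <= (5 + mu) * f).
  { pose proof (total_weight_le n d w X hw beta) as HWY.
    change (W <= 4 * f + Y) in HWY. lra. }
  assert (Hratio : 0 <= w i / W) by (unfold Rdiv; apply Rmult_le_pos; [lra|left; apply Rinv_0_lt_compat; lra]).
  assert (Hwi_W : w i = (w i / W) * W) by (field; lra).
  pose proof (weighted_loss_le n d w X hw beta i hi) as Hnum.
  change (w i * g (rowdot d X i beta) <= w i + Rabs (y i)) in Hnum.
  nra.
Qed.

Lemma lubR_le (E : R -> Prop) (s : R) :
  (exists x, E x) -> is_upper_bound E s -> lubR E <= s.
Proof.
  intros Hne Hub. unfold lubR.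
  assert (Hlub : exists m, is_lub E m).
  { destruct (completeness E) as [m Hm]; [now exists s|exact Hne|now exists m]. }
  apply (proj2 (epsilon_spec (inhabits 0) (fun m => is_lub E m) Hlub)). exact Hub.
Qed.

Theorem lemma9 (n d k : nat) (X : nat -> nat -> R) (w : nat -> R) (mu : R)
  (U : nat -> nat -> R)
  (hn : (0 < n)%nat) (hd : (0 < d)%nat) (hmu1 : 1 <= mu)
  (hw : forall j, (j < n)%nat -> 0 < w j)
  (hmu : mu_complex n d w X mu)
  (hk : (k <= d)%nat)
  (hU : orthonormal_basis_colspace n d k w X U) :
  let W := sumR n w in
  let s := fun i => (20 + 2 * mu) * (row_norm2 k U i + w i / W) in
  (forall i, (i < n)%nat -> sensitivity n d w X i <= s i) /\
  sumR n (fun i => sensitivity n d w X i) <= sumR n s /\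
  sumR n s <= 44 * mu * sqrt (INR n * INR d).
Proof.
  intros W s.
  assert (Hsens : forall i, (i < n)%nat -> sensitivity n d w X i <= s i).
  { intros i hi. apply lubR_le; [now exists (w i * g (rowdot d X i (fun _ => 0))
                                   / f_w n d w X (fun _ => 0)), (fun _ => 0)|].
    intros r [beta ->]. pose proof (f_w_pos n d w X hw beta hn).
    apply (Rmult_le_reg_r (f_w n d w X beta)); [lra|].
    unfold Rdiv. rewrite Rmult_assoc, Rinv_l, Rmult_1_r by lra.
    now apply (weighted_loss_ratio_le n d k X w mu U). }
  split; [exact Hsens|]. split; [now apply sumR_le|].
  assert (HW : 0 < W) by (apply sumR_pos; assumption).
  assert (Hs : sumR n s = (20 + 2 * mu) * (sumR n (fun i => row_norm2 k U i) + 1)).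
  { unfold s. rewrite sumR_scal_l, sumR_plus. f_equal. f_equal.
    unfold Rdiv. rewrite sumR_scal_r. fold W. field. lra. }
  assert (Hrows : sumR n (fun i => row_norm2 k U i) <= sqrt (INR n * INR d)).
  { eapply Rle_trans; [apply (sum_row_norm2_le n k U (proj1 hU))|].
    apply sqrt_le_1_alt, Rmult_le_compat_l; [apply pos_INR|now apply le_INR]. }
  assert (H1 : 1 <= sqrt (INR n * INR d)).
  { rewrite <- sqrt_1. apply sqrt_le_1_alt.
    assert (1 <= INR n) by (apply (le_INR 1); lia).
    assert (1 <= INR d) by (apply (le_INR 1); lia). nra. }
  rewrite Hs. nra.
Qed.
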